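(* Let $r\ge 2$ and let $\mathcal{H}=\{H_1,\ldots,H_n\}$ be a collection of $n$ matchings, each of size $N$, in an $r$-uniform hypergraph. Let $m$ be the size of a maximum rainbow matching for $\mathcal{H}$. Then $$(n-m)\frac{2N-(r+1)m}{r-1}\leq\frac12\binom{2r}{r}m.$$
   Context: A hypergraph is $r$-uniform if every edge contains exactly $r$ vertices. A matching is a set of pairwise vertex-disjoint edges. Given a collection (repetitions allowed) of matchings $H_1,\dots,H_n$ in a hypergraph, a matching $M\subseteq \bigcup_{i=1}^n H_i$ is rainbow if there is an injection $\phi:M\to[n]$ such that every edge $e\in M$ belongs to $H_{\phi(e)}$. *)

From mathcomp Require Import all_boot all_order all_algebra.
Set Implicit Arguments. Unset Strict Implicit. Unset Printing Implicit Defensive.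

Definition uniform (V : finType) (r : nat) (E : {set {set V}}) : Prop :=
  forall e, e \in E -> #|e| = r.

Definition is_matching (V : finType) (M : {set {set V}}) : Prop :=
  forall e f, e \in M -> f \in M -> e != f -> [disjoint e & f].

Definition rainbow (V : finType) (n : nat) (H : 'I_n -> {set {set V}})
  (M : {set {set V}}) : Prop :=
  is_matching M /\
  exists phi : {set V} -> 'I_n,
    {in M &, injective phi} /\ (forall e, e \in M -> e \in H (phi e)).

(* Let M be a maximum rainbow matching with vertex set W, and i one of the n - m
   colours not used by M.  By maximality every edge of H_i meets W; call it private
   to e in M if it meets W only inside e.  An edge meeting W in one vertex is private,
   so counting |f :&: W| over f in H_i gives 2N <= r m + sum_e #private_i(e), and e has
   at most r private edges of colour i.  Private edges at e of distinct unused colours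
   intersect, for otherwise trading e for both of them would enlarge M.  Hence, for the
   colours i having two private edges a_i, b_i at e, the pairs (a_i, b_i), (b_i, a_i)
   form a Bollobas set-pair system of r-sets, and there are at most C(2r, r) / 2 such
   colours.  Summing over e and over the unused colours gives the inequality. *)

From mathcomp Require Import all_boot all_order all_algebra.
From mathcomp Require Import zify lra.

Set Implicit Arguments.
Unset Strict Implicit.
Unset Printing Implicit Defensive.

Import Order.TTheory GRing.Theory Num.Theory.

Lemma card_set_cond_sum (T : finType) (A : {pred T}) (p : pred T) :
  #|[set x in A | p x]| = \sum_(x in A) p x.
Proof.
rewrite -sum1_card (eq_bigl (fun x => (x \in A) && p x)) => [|x]; last by rewrite inE.
by rewrite big_mkcondr; apply: eq_bigr => x _; case: (p x).
Qed.

Lemma double_counting (I J : finType) (A : {pred I}) (B : {pred J}) (R : I -> J -> bool) :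
  \sum_(i in A) #|[set j in B | R i j]| = \sum_(j in B) #|[set i in A | R i j]|.
Proof.
under eq_bigr do rewrite card_set_cond_sum.
by rewrite exchange_big; under [RHS]eq_bigr do rewrite card_set_cond_sum.
Qed.

Lemma sum_card_setI_le (T : finType) (P : {set {set T}}) (S : {set T}) :
  trivIset P -> \sum_(A in P) #|A :&: S| <= #|S|.
Proof.
move=> tiP.
have cardIE (B : {set T}) : #|B :&: S| = \sum_(x in B | x \in S) 1.
  by rewrite -sum1_card; apply: eq_bigl => x; rewrite inE.
under eq_bigr do rewrite cardIE.
by rewrite -big_trivIset_cond // -cardIE subset_leq_card ?subsetIr.
Qed.

Lemma rainbow_replace (V : finType) (n : nat) (H : 'I_n -> {set {set V}})
    (M E F : {set {set V}}) (phi psi : {set V} -> 'I_n) :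
  is_matching M -> {in M &, injective phi} -> (forall e, e \in M -> e \in H (phi e)) ->
  is_matching F -> {in F &, injective psi} -> (forall f, f \in F -> f \in H (psi f)) ->
  (forall f, f \in F -> psi f \notin phi @: M) ->
  (forall f g, f \in F -> g \in M :\: E -> [disjoint f & g]) ->
  rainbow H ((M :\: E) :|: F).
Proof.
move=> matchM phi_inj phi_col matchF psi_inj psi_col psi_new disjFM.
have old g : g \in (M :\: E) :|: F -> g \notin F -> g \in M :\: E.
  by rewrite inE => /orP[-> | ->].
have oldM g : g \in (M :\: E) :|: F -> g \notin F -> g \in M.
  by move=> gU gF; have := old g gU gF; rewrite inE => /andP[].
split=> [f g fU gU fg | ].
  case: (boolP (f \in F)) => fF; case: (boolP (g \in F)) => gF.
  - exact: matchF.
  - exact: disjFM fF (old g gU gF).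
  - by rewrite disjoint_sym; apply: disjFM gF (old f fU fF).
  - exact: matchM (oldM f fU fF) (oldM g gU gF) fg.
exists (fun g => if g \in F then psi g else phi g); split=> [f g fU gU /= | f fU /=].
  case: (boolP (f \in F)) => fF; case: (boolP (g \in F)) => gF fg.
  - exact: psi_inj.
  - by have := psi_new f fF; rewrite fg imset_f ?(oldM g gU gF).
  - by have := psi_new g gF; rewrite -fg imset_f ?(oldM f fU fF).
  - exact: phi_inj (oldM f fU fF) (oldM g gU gF) fg.
by case: (boolP (f \in F)) => fF; [apply: psi_col | apply: phi_col (oldM f fU fF)].
Qed.

Section SetPairSystems.

Local Open Scope ring_scope.

Definition pair_weight (a b : nat) : rat := ('C(a + b, a))%:R^-1.

Lemma pair_weight_ge0 a b : 0 <= pair_weight a b.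
Proof. by rewrite invr_ge0 ler0n. Qed.

Lemma pair_weight_le1 a b : pair_weight a b <= 1.
Proof. by rewrite invf_le1 ?ler1n ?ltr0n ?bin_gt0 ?leq_addr. Qed.

Lemma pair_weight_recr a b :
  (0 < b)%N -> b%:R * pair_weight a b.-1 = (a + b)%:R * pair_weight a b.
Proof.
case: b => // b _; have binom_neq0 c d : ('C(c + d, c))%:R != 0 :> rat.
  by rewrite pnatr_eq0 -lt0n bin_gt0 leq_addr.
apply/eqP; rewrite /pair_weight /= eqr_div ?binom_neq0 //.
rewrite -!natrM eqr_nat.
have := mul_bin_down (a + b.+1) a; rewrite addnS /= -addnS addKn => ->.
by rewrite mulnC.
Qed.

Lemma sum_le1_subsingleton (J : finType) (P : pred J) (F : J -> rat) :
  (forall i j, P i -> P j -> i = j) -> (forall i, F i <= 1) -> \sum_(i | P i) F i <= 1.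
Proof.
move=> Pu F_le1; case: (pickP P) => [i0 Pi0 | P0]; last by rewrite big_pred0.
rewrite (bigD1 i0) //= big1 ?addr0 // => j /andP[Pj /eqP ji0].
by case: ji0; apply: Pu.
Qed.
Variables (V I : finType).

Definition set_pair_system (X : {set V}) (P : pred I) (A B : I -> {set V}) : Prop :=
  [/\ forall i, P i -> A i :|: B i \subset X,
      forall i, P i -> [disjoint A i & B i] &
      forall i j, P i -> P j -> i != j -> ~~ [disjoint A i & B j]].

Lemma set_pair_system_delete X P A B x :
  set_pair_system X P A B ->
  set_pair_system (X :\ x) [pred i | P i & x \notin A i] A (fun i => B i :\ x).
Proof.
case=> sABX dAB cross.
split=> [i /andP[Pi xA] | i /andP[Pi _] | i j /andP[Pi xA] /andP[Pj _] ij].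
- rewrite subUset; have := sABX i Pi; rewrite subUset => /andP[sAX sBX].
  apply/andP; split; apply/subsetP=> y; rewrite !inE.
    by move=> yA; rewrite (subsetP sAX) // andbT; apply: contraNneq xA => <-.
  by case/andP=> -> /(subsetP sBX).
- exact: disjointWr (subsetDl _ _) (dAB i Pi).
- have := cross i j Pi Pj ij; rewrite -!setI_eq0 => /set0Pn[y].
  rewrite !inE => /andP[yA yB].
  apply/set0Pn; exists y; rewrite !inE yA yB andbT.
  by apply: contraNneq xA => <-.
Qed.

Lemma set_pair_system_B_eq0 X P A B i0 :
  set_pair_system X P A B -> P i0 -> B i0 = set0 -> forall j, P j -> j = i0.
Proof.
case=> _ _ cross Pi0 B0 j Pj; case: (eqVneq j i0) => // ji0.
by have := cross j i0 Pj Pi0 ji0; rewrite B0 -setI_eq0 setI0 eqxx.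
Qed.

(* The averaging step of Bollobas' inequality: summed over the pairs of a system, the
   right-hand sides regroup, point by point, into the weights of the systems obtained by
   deleting x (set_pair_system_delete). *)
Lemma card_mul_pair_weight_le (X A B : {set V}) :
  A :|: B \subset X -> [disjoint A & B] -> B != set0 ->
  #|X|%:R * pair_weight #|A| #|B| <= \sum_(x in X | x \notin A) pair_weight #|A| #|B :\ x|.
Proof.
rewrite subUset => /andP[sAX sBX] dAB B_neq0.
rewrite (eq_bigl [in X :\: A]) => [|x]; last by rewrite in_setD andbC.
have sBXA : B \subset X :\: A by rewrite subsetD sBX disjoint_sym.
rewrite (big_setID B) (setIidPr sBXA) /=.
rewrite (eq_bigr (fun=> pair_weight #|A| #|B|.-1)) => [|x xB]; last first.
  by rewrite (cardsD1 x B) xB.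
rewrite [X in _ + X](eq_bigr (fun=> pair_weight #|A| #|B|)) => [|x]; last first.
  by rewrite !inE => /andP[xB _]; rewrite (cardsD1 x B) (negbTE xB).
rewrite !sumr_const -[_ *+ #|B|]mulr_natl -[_ *+ #|_ :\: B|]mulr_natl.
rewrite pair_weight_recr ?card_gt0 // -mulrDl -natrD.
rewrite ler_wpM2r ?pair_weight_ge0 // ler_nat -(cardsID A X) (setIidPr sAX).
by rewrite -(cardsID B (X :\: A)) (setIidPr sBXA) addnA.
Qed.

Theorem bollobas_set_pairs X P A B :
  set_pair_system X P A B -> \sum_(i | P i) pair_weight #|A i| #|B i| <= 1.
Proof.
move cardX: #|X| => k; elim: k X P B cardX => [|k IH] X P B cardX sys.
  apply: sum_le1_subsingleton (fun _ => pair_weight_le1 _ _) => i j Pi Pj.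
  suff Bi0 : B i = set0 by rewrite (set_pair_system_B_eq0 sys Pi Bi0 Pj).
  apply/eqP; rewrite -subset0.
  have [sABX _ _] := sys; have := sABX i Pi; rewrite subUset => /andP[_].
  by move/eqP: cardX; rewrite cards_eq0 => /eqP->.
case: (boolP [exists i, P i && (B i == set0)]) =>
    [/existsP[i0 /andP[Pi0 /eqP B0]] | /existsPn B_neq0].
  apply: sum_le1_subsingleton (fun _ => pair_weight_le1 _ _) => i j Pi Pj.
  by rewrite (set_pair_system_B_eq0 sys Pi0 B0 Pi) (set_pair_system_B_eq0 sys Pi0 B0 Pj).
have X_gt0 : 0 < #|X|%:R :> rat by rewrite cardX.
rewrite -(ler_pM2l X_gt0) mulr1 mulr_sumr.
have [sABX dAB _] := sys.
apply: (@le_trans _ _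
  (\sum_(i | P i) \sum_(x in X | x \notin A i) pair_weight #|A i| #|B i :\ x|)).
  apply: ler_sum => i Pi; apply: card_mul_pair_weight_le (sABX i Pi) (dAB i Pi) _.
  by have := B_neq0 i; rewrite Pi.
rewrite (exchange_big_dep (mem X)) /= => [|i x _ /andP[]//].
rewrite -sumr_const; apply: ler_sum => x xX.
rewrite (eq_bigl [pred i | P i & x \notin A i]) => [|i]; last by rewrite /= xX.
apply: (IH (X :\ x)); last exact: set_pair_system_delete.
by move: cardX; rewrite (cardsD1 x) xX => -[].
Qed.

End SetPairSystems.

Lemma two_distinct_members (T : finType) (A : {set T}) (x0 : T) :
  1 < #|A| ->
  [/\ nth x0 (enum A) 0 \in A, nth x0 (enum A) 1 \in A &
      nth x0 (enum A) 0 != nth x0 (enum A) 1].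
Proof.
rewrite cardE => A_gt1; have A_gt0 := ltnW A_gt1.
have nth_in k : k < size (enum A) -> nth x0 (enum A) k \in A.
  by move=> ?; rewrite -mem_enum mem_nth.
by rewrite !nth_in // nth_uniq ?enum_uniq.
Qed.

Lemma cross_intersecting_matchings_card (V I : finType) (K : {set I})
    (S : I -> {set {set V}}) (r : nat) :
  0 < r ->
  (forall i, i \in K -> [/\ 1 < #|S i|, is_matching (S i) & uniform r (S i)]) ->
  (forall i j f g, i \in K -> j \in K -> i != j -> f \in S i -> g \in S j ->
     ~~ [disjoint f & g]) ->
  2 * #|K| <= 'C(2 * r, r).
Proof.
move=> r_gt0 SK cross.
pose a i := nth set0 (enum (S i)) 0; pose b i := nth set0 (enum (S i)) 1.
pose A (p : I * bool) := if p.2 then a p.1 else b p.1.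
pose B (p : I * bool) := if p.2 then b p.1 else a p.1.
have AB p : p.1 \in K -> [/\ A p \in S p.1, B p \in S p.1 & A p != B p].
  case: p => i [] /= /SK[/(two_distinct_members set0) [ai bi ab] _ _]; first by [].
  by rewrite eq_sym.
have A_neq0 p : p.1 \in K -> A p != set0.
  move=> pK; have [AS _ _] := AB p pK; have [_ _ /(_ _ AS) cardA] := SK _ pK.
  by rewrite -card_gt0 cardA.
(* Within one index i, A (i, b) meets B (i, ~~ b) because they are the same nonempty set. *)
have sys : set_pair_system [set: V] [in setX K [set: bool]] A B.
  split=> [p _ | p | p q]; rewrite ?subsetT // !inE ?andbT.
    move=> pK; have [AS BS AB_neq] := AB p pK; have [_ matchS _] := SK _ pK.
    exact: matchS.
  move=> pK qK pq; have [AS _ _] := AB p pK; have [_ BS _] := AB q qK.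
  have [ij | ij] := eqVneq p.1 q.1; last exact: cross pK qK ij AS BS.
  suff -> : B q = A p by rewrite -setI_eq0 setIid A_neq0.
  move: pq ij {pK qK AS BS}; rewrite /A /B.
  by case: p q => [i []] [j []] /= pq ij; rewrite ij ?eqxx in pq *.
have := bollobas_set_pairs sys.
rewrite (eq_bigr (fun=> pair_weight r r)) => [|p]; last first.
  rewrite !inE andbT => pK; have [AS BS _] := AB p pK; have [_ _ unif] := SK _ pK.
  by rewrite (unif _ AS) (unif _ BS).
rewrite sumr_const cardsX cardsT card_bool -mulr_natl.
rewrite ler_pdivrMr ?ltr0n ?bin_gt0 ?leq_addr // mul1r ler_nat.
by rewrite mulnC !mul2n addnn.
Qed.

Section MaximumRainbowMatching.

Variables (V : finType) (n r : nat) (H : 'I_n -> {set {set V}}).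
Hypothesis r_gt0 : 0 < r.
Hypothesis H_uniform : forall i, uniform r (H i).
Hypothesis H_matching : forall i, is_matching (H i).
Variables (M : {set {set V}}) (phi : {set V} -> 'I_n).
Hypothesis M_matching : is_matching M.
Hypothesis phi_inj : {in M &, injective phi}.
Hypothesis phi_colour : forall e, e \in M -> e \in H (phi e).
Hypothesis M_maximum : forall M', rainbow H M' -> #|M'| <= #|M|.

Definition free_colours : {set 'I_n} := ~: (phi @: M).

Definition private_edges i (e : {set V}) : {set {set V}} :=
  [set f in H i | f :&: cover M \subset e].

Definition rich_edges i : {set {set V}} := [set e in M | 1 < #|private_edges i e|].

Lemma edge_neq0 i f : f \in H i -> f != set0.
Proof. by move=> fH; rewrite -card_gt0 (H_uniform fH). Qed.

Lemma sub_cover e : e \in M -> e \subset cover M.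
Proof. exact: bigcup_sup. Qed.

Lemma free_edge_meets_cover i f :
  i \in free_colours -> f \in H i -> f :&: cover M != set0.
Proof.
move=> i_free fH; apply/negP => /eqP fW0.
have fM : f \notin M.
  by apply: contraNN (edge_neq0 fH) => fM; rewrite -fW0 (setIidPl (sub_cover fM)).
suff /M_maximum : rainbow H ((M :\: set0) :|: [set f]).
  by rewrite setD0 setUC cardsU1 fM ltnn.
apply: (rainbow_replace (phi := phi) (psi := fun=> i)) => //.
- by move=> g h; rewrite !inE => /eqP-> /eqP->; rewrite eqxx.
- by move=> g h; rewrite !inE => /eqP-> /eqP->.
- by move=> g; rewrite inE => /eqP->.
- by move=> g _; rewrite -in_setC.
move=> g h; rewrite setD0 inE => /eqP-> hM.
by rewrite -setI_eq0 -subset0 -fW0 setIS ?sub_cover.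
Qed.

Lemma private_disjoint_other i e f g :
  e \in M -> f \in private_edges i e -> g \in M -> g != e -> [disjoint f & g].
Proof.
move=> eM; rewrite inE => /andP[_ fWe] gM ge.
rewrite -setI_eq0; apply/set0Pn => -[x]; rewrite inE => /andP[xf xg].
have xe : x \in e by apply: (subsetP fWe); rewrite inE xf (subsetP (sub_cover gM)).
have := M_matching gM eM ge; rewrite -setI_eq0 => /set0Pn; apply.
by exists x; rewrite inE xg.
Qed.

Lemma private_edge_colour i e f : f \in private_edges i e -> f \in H i.
Proof. by rewrite inE => /andP[]. Qed.

Lemma private_notin_other i e f : e \in M -> f \in private_edges i e -> f \notin M :\ e.
Proof.
move=> eM fP; apply/negP; rewrite !inE => /andP[fe fM].
have := private_disjoint_other eM fP fM fe; rewrite -setI_eq0 setIid.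
by rewrite (negbTE (edge_neq0 (private_edge_colour fP))).
Qed.

Lemma private_edges_meet i j e f g :
  e \in M -> i \in free_colours -> j \in free_colours -> i != j ->
  f \in private_edges i e -> g \in private_edges j e -> ~~ [disjoint f & g].
Proof.
move=> eM i_free j_free ij fP gP; apply/negP => dfg.
have fg : f != g.
  apply: contraTneq dfg => <-; rewrite -setI_eq0 setIid.
  exact: edge_neq0 (private_edge_colour fP).
have gf := fg; rewrite eq_sym in gf.
suff /M_maximum : rainbow H ((M :\ e) :|: [set f; g]).
  have : [disjoint M :\ e & [set f; g]].
    rewrite disjoint_sym disjoints_subset subUset !sub1set !in_setC.
    by rewrite (private_notin_other eM fP) (private_notin_other eM gP).
  rewrite -setI_eq0 => /eqP I0; rewrite cardsU I0 cards0 cards2 fg (cardsD1 e M) eM.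
  lia.
apply: (rainbow_replace (phi := phi) (psi := fun h => if h == f then i else j)) => //.
- by move=> h k; rewrite !inE => /orP[] /eqP-> /orP[] /eqP->; rewrite ?eqxx // disjoint_sym.
- move=> h k; rewrite !inE => /orP[] /eqP-> /orP[] /eqP->; rewrite ?eqxx ?(negbTE gf) //.
    by move=> eij; rewrite eij eqxx in ij.
  by move=> eji; rewrite eji eqxx in ij.
- move=> h; rewrite !inE => /orP[] /eqP->; rewrite ?eqxx ?(negbTE gf).
    exact: private_edge_colour fP.
  exact: private_edge_colour gP.
- by move=> h _; case: ifP; rewrite -in_setC.
- move=> h k; rewrite !inE => /orP[] /eqP-> /andP[ke kM].
    exact: private_disjoint_other fP kM ke.
  exact: private_disjoint_other gP kM ke.
Qed.

Lemma trivIset_colour i : trivIset (H i).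
Proof. by apply/trivIsetP; apply: H_matching. Qed.

Lemma card_private_edges_le i e :
  i \in free_colours -> e \in M -> #|private_edges i e| <= r.
Proof.
move=> i_free eM; rewrite -(H_uniform (phi_colour eM)).
have sub_Hi : private_edges i e \subset H i by apply/subsetP => f /private_edge_colour.
apply: leq_trans (sum_card_setI_le e (trivIsetS sub_Hi (trivIset_colour i))).
rewrite -sum1_card; apply: leq_sum => f fP; rewrite card_gt0.
move: fP; rewrite inE => /andP[fH fWe].
apply: contraNneq (free_edge_meets_cover i_free fH) => fe0.
by rewrite -subset0 -fe0 subsetI subsetIl.
Qed.

Lemma two_le_meet_cover i f :
  i \in free_colours -> f \in H i ->
  2 <= #|f :&: cover M| + #|[set e in M | f :&: cover M \subset e]|.
Proof.
move=> i_free fH; have := free_edge_meets_cover i_free fH; rewrite -card_gt0 => fW_gt0.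
case: (ltnP 1 #|f :&: cover M|) => [fW_gt1 | fW_le1].
  by rewrite (leq_trans fW_gt1) ?leq_addr.
have /cards1P[w fW_w] : #|f :&: cover M| == 1 by rewrite eqn_leq fW_le1 fW_gt0.
have /bigcupP[e eM we] : w \in cover M.
  have : w \in f :&: cover M by rewrite fW_w set11.
  by rewrite inE => /andP[].
rewrite fW_w cards1 add1n ltnS card_gt0; apply/set0Pn.
by exists e; rewrite inE eM sub1set.
Qed.

Lemma card_cover_le : #|cover M| <= r * #|M|.
Proof.
rewrite mulnC -sum_nat_const; apply: leq_trans (leq_card_cover M).1 _.
by rewrite (eq_bigr (fun=> r)) // => e eM; apply: H_uniform (phi_colour eM).
Qed.

Lemma double_card_le_private i :
  i \in free_colours -> 2 * #|H i| <= r * #|M| + \sum_(e in M) #|private_edges i e|.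
Proof.
move=> i_free; rewrite mulnC -sum_nat_const.
apply: (@leq_trans
  (\sum_(f in H i) (#|f :&: cover M| + #|[set e in M | f :&: cover M \subset e]|))).
  by apply: leq_sum => f; apply: two_le_meet_cover.
rewrite big_split leq_add //; last by rewrite double_counting.
exact: leq_trans (sum_card_setI_le _ (trivIset_colour i)) card_cover_le.
Qed.

Lemma double_card_le_rich i :
  i \in free_colours -> 2 * #|H i| <= (r + 1) * #|M| + (r - 1) * #|rich_edges i|.
Proof.
move=> i_free; apply: leq_trans (double_card_le_private i_free) _.
rewrite card_set_cond_sum mulnDl mul1n -addnA leq_add2l big_distrr -sum1_card -big_split.
apply: leq_sum => e eM; have := card_private_edges_le i_free eM.
by case: ltnP => /=; lia.
Qed.

Lemma double_card_rich_colours_le e :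
  e \in M -> 2 * #|[set i in free_colours | 1 < #|private_edges i e|]| <= 'C(2 * r, r).
Proof.
move=> eM; apply: (cross_intersecting_matchings_card (S := private_edges^~ e) r_gt0).
  move=> i; rewrite inE => /andP[_ private_gt1]; split=> //.
    move=> f g /private_edge_colour fH /private_edge_colour gH.
    exact: H_matching i f g fH gH.
  by move=> f /private_edge_colour; apply: H_uniform.
move=> i j f g /setIdP[i_free _] /setIdP[j_free _].
exact: private_edges_meet.
Qed.

Lemma double_sum_rich_le :
  2 * \sum_(i in free_colours) #|rich_edges i| <= #|M| * 'C(2 * r, r).
Proof.
rewrite double_counting big_distrr -sum_nat_const; apply: leq_sum => e eM.
exact: double_card_rich_colours_le.
Qed.

Lemma card_free_colours : #|free_colours| = n - #|M|.
Proof. by rewrite -[in RHS](card_ord n) -(cardsC (phi @: M)) card_in_imset // addKn. Qed.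

Lemma card_maximum_le : #|M| <= n.
Proof. by have := max_card (phi @: M); rewrite card_ord card_in_imset. Qed.

Lemma maximum_rainbow_bound N :
  (forall i, #|H i| = N) ->
  2 * ((n - #|M|) * (2 * N)) <=
    2 * ((n - #|M|) * ((r + 1) * #|M|)) + (r - 1) * (#|M| * 'C(2 * r, r)).
Proof.
move=> card_H; rewrite -card_free_colours.
have : \sum_(i in free_colours) 2 * #|H i| <=
       \sum_(i in free_colours) ((r + 1) * #|M| + (r - 1) * #|rich_edges i|).
  by apply: leq_sum => i; apply: double_card_le_rich.
rewrite (eq_bigr (fun=> 2 * N)) => [|i _]; last by rewrite card_H.
rewrite sum_nat_const big_split /= sum_nat_const -big_distrr /=.
have := double_sum_rich_le; set S := \sum_(i in free_colours) _ => sum_rich_le bound.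
apply: leq_trans (_ : 2 * (#|free_colours| * ((r + 1) * #|M|) + (r - 1) * S) <= _).
  by rewrite leq_mul2l bound orbT.
by rewrite mulnDr leq_add2l mulnCA leq_mul2l sum_rich_le orbT.
Qed.

End MaximumRainbowMatching.

Local Open Scope ring_scope.

Theorem lemma2p1 (V : finType) (r n N m : nat) (H : 'I_n -> {set {set V}}) :
  (2 <= r)%N ->
  (forall i, uniform r (H i) /\ is_matching (H i) /\ #|H i| = N) ->
  (exists M, rainbow H M /\ #|M| = m) ->
  (forall M, rainbow H M -> (#|M| <= m)%N) ->
  ((n%:R - m%:R) * (((2 * N)%N)%:R - ((r + 1) * m)%N%:R) / (r - 1)%N%:R
     <= 2^-1 * ('C(2 * r, r))%:R * m%:R :> rat).
Proof.
move=> r_ge2 H_props [M [[M_matching [phi [phi_inj phi_colour]]] <-]] M_max.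
have r_gt0 : (0 < r)%N by apply: leq_trans r_ge2.
have H_uniform i : uniform r (H i) by case: (H_props i).
have H_matching i : is_matching (H i) by case: (H_props i) => _ [].
have card_H i : #|H i| = N by case: (H_props i) => _ [].
have := maximum_rainbow_bound r_gt0 H_uniform H_matching M_matching phi_inj phi_colour
  M_max card_H.
rewrite -natrB ?(card_maximum_le phi_inj) // ler_pdivrMr ?ltr0n ?subn_gt0 //.
rewrite -(ler_nat rat) !natrD !natrM.
lra.
Qed.
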